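(* Let $G$ be a graph on $V$ whose adjacency matrix $A$ is invertible over $\mathbf F_2$, and let $G^R=P_V(G)$ be its retrograph, i.e. the graph on $V$ with adjacency matrix $A^{-1}$. Then: (a) $G^R$ is the unique graph $H$ on $V$ with $\mathcal R_0(H)=\{V\setminus S:S\in\mathcal R_0(G)\}$; (b) for every $W\subseteq V$, $W$ is reducible in $G$ if and only if $V\setminus W$ is reducible in $G^R$; (c) in that case $\Gamma_W(G)$ is nonsingular and $(\Gamma_W(G))^R=I_{V\setminus W}(G^R)$.
   Context: A graph means a finite simple graph in which loops are allowed, with adjacency matrix $A$ over $\mathbf F_2$ ($A_{vv}=1$ iff $v$ has a loop); a graph is nonsingular if its adjacency matrix is invertible over $\mathbf F_2$. $I_U(G)$ is the induced subgraph on $U$. Let $\mathcal V$ be the $\mathbf F_2$-space with basis $V$, $\mathcal E(x,y)=x^TAy$, $\langle W\rangle$ the span of $W$, $\langle W\rangle^{\perp\mathcal E}=\{x:\mathcal E(x,w)=0\ \forall w\in\langle W\rangle\}$; $W$ is reducible if $\langle W\rangle+\langle W\rangle^{\perp\mathcal E}=\mathcal V$; then $\mathcal E^W(x_1,x_2)=\mathcal E(x_1',x_2')$ with $x_i'\in\langle W\rangle^{\perp\mathcal E}$, $x_i-x_i'\in\langle W\rangle$, and $\Gamma_W(G)$ is the graph on $V\setminus W$ in which $v,w$ (possibly equal) are joined iff $\mathcal E^W(v,w)=1$. The pivotal poset $\mathcal R_0(G)$ is the set of reducible $W$ of nullity $0$, equivalently those with $A_{W,W}$ invertible. For a nonsingular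 graph $G$, its retrograph $G^R$ is the graph on the same vertex set with adjacency matrix $A^{-1}$ (the pivot of $G$ by its whole vertex set). *)

(* Graphs on vertex set V = 'I_n, given by a symmetric
   adjacency matrix over F_2 (loops = diagonal entries). *)
From HB Require Import structures.
From mathcomp Require Import all_boot all_order all_algebra.
Set Implicit Arguments. Unset Strict Implicit. Unset Printing Implicit Defensive.
Import GRing.Theory.
Local Open Scope ring_scope.

Notation F2 := 'F_2.

Definition is_graph n (A : 'M[F2]_n) : Prop := A^T = A.

(* A_{W,W}: adjacency matrix of the induced subgraph I_W(G),
   vertices of W listed in the canonical order enum W *)
Definition subadj n (W : {set 'I_n}) (A : 'M[F2]_n) : 'M[F2]_#|W| :=
  mxsub (@enum_val _ (mem W)) (@enum_val _ (mem W)) A.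

Definition Eform n (A : 'M[F2]_n) (x y : 'cV[F2]_n) : F2 := (x^T *m A *m y) 0 0.

(* x in <W>, the span of the basis vectors in W: support of x contained in W *)
Definition in_span n (W : {set 'I_n}) (x : 'cV[F2]_n) : bool :=
  [forall i, (i \notin W) ==> (x i 0 == 0)].

Definition in_perp n (A : 'M[F2]_n) (W : {set 'I_n}) (x : 'cV[F2]_n) : bool :=
  [forall y, in_span W y ==> (Eform A x y == 0)].

Definition reducible n (A : 'M[F2]_n) (W : {set 'I_n}) : Prop :=
  forall x : 'cV[F2]_n, exists y z, [/\ in_span W y, in_perp A W z & x = y + z].

(* a chosen x' in <W>^perp with x - x' in <W> (well-defined up to irrelevant
   choice when W is reducible) *)
Definition perp_part n (A : 'M[F2]_n) (W : {set 'I_n}) (x : 'cV[F2]_n) : 'cV[F2]_n :=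
  odflt 0 [pick x' | in_perp A W x' && in_span W (x - x')].

Definition EW n (A : 'M[F2]_n) (W : {set 'I_n}) (x1 x2 : 'cV[F2]_n) : F2 :=
  Eform A (perp_part A W x1) (perp_part A W x2).

(* adjacency matrix of Gamma_W(G), a graph on V \ W, vertices listed by enum (~: W) *)
Definition Gamma n (A : 'M[F2]_n) (W : {set 'I_n}) : 'M[F2]_#|~: W| :=
  \matrix_(i, j) EW A W (delta_mx (@enum_val _ (mem (~: W)) i) 0)
                        (delta_mx (@enum_val _ (mem (~: W)) j) 0).

Definition R0 n (A : 'M[F2]_n) : {set {set 'I_n}} :=
  [set W : {set 'I_n} | subadj W A \in unitmx].

Definition retro n (A : 'M[F2]_n) : 'M[F2]_n := invmx A.

From HB Require Import structures.
From mathcomp Require Import all_boot all_order all_algebra.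
From mathcomp Require Import ring.
Import GRing.Theory.
Local Open Scope ring_scope.
Set Implicit Arguments. Unset Strict Implicit.

(* Write E_S : F_2^S -> F_2^V for the coordinate embedding of
   a vertex set S, so that the induced adjacency matrix is A_{S,S} = E_S^T A E_S.
   The pivot of the argument is the notion "M is nondegenerate on S": no
   nonzero vector supported in S has M x vanishing on S.  We prove:
   - A_{S,S} is invertible iff A is nondegenerate on S, i.e. S in R_0(A);
   - if M N = 1 and M is nondegenerate on S then N is nondegenerate on V \ S
     (a kernel form of Jacobi's complementary-minor identity), so
     R_0(A^{-1}) = { V \ S : S in R_0(A) };
   - for A symmetric and nonsingular, W is reducible iff A is nondegenerate
     on W; with the previous item this is (b);
   - a symmetric F_2-matrix is determined by which singletons and pairs are
     nondegenerate, hence by its pivotal poset; this is the uniqueness in (a).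
   For (c), let X be the matrix whose columns are the E-orthogonal parts of the
   basis vectors outside W.  Then Gamma_W(A) = X^T A X, and a direct
   computation gives A^{-1}_{V\W,V\W} X^T A X = 1. *)

(* The coordinate embedding E_S, as an n x |S| matrix over any ring; the
   vertices of S are listed in the order enum S, as in subadj. *)
Definition embed {R : pzRingType} n (S : {set 'I_n}) : 'M[R]_(n, #|S|) :=
  \matrix_(i, a) ((i == enum_val a)%:R).

Lemma embedT_mulE (R : pzRingType) n (S : {set 'I_n}) m (N : 'M[R]_(n, m)) a j :
  ((embed S)^T *m N) a j = N (enum_val a) j.
Proof.
rewrite mxE (bigD1 (enum_val a)) //= big1 => [|i /negbTE ne].
  by rewrite !mxE eqxx mul1r addr0.
by rewrite !mxE ne mul0r.
Qed.

Lemma mul_embedE (R : pzRingType) n (S : {set 'I_n}) m (N : 'M[R]_(m, n)) i b :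
  (N *m embed S) i b = N i (enum_val b).
Proof.
rewrite mxE (bigD1 (enum_val b)) //= big1 => [|l /negbTE ne].
  by rewrite !mxE eqxx mulr1 addr0.
by rewrite !mxE ne mulr0.
Qed.

Lemma embed_mul_in (R : pzRingType) n (S : {set 'I_n}) m (N : 'M[R]_(#|S|, m)) a j :
  (embed S *m N) (enum_val a) j = N a j.
Proof.
rewrite mxE (bigD1 a) //= big1 => [|b ne].
  by rewrite !mxE eqxx mul1r addr0.
by rewrite !mxE (inj_eq enum_val_inj) eq_sym (negbTE ne) mul0r.
Qed.

Lemma embed_mul_out (R : pzRingType) n (S : {set 'I_n}) m (N : 'M[R]_(#|S|, m)) i j :
  i \notin S -> (embed S *m N) i j = 0.
Proof.
move=> iS; rewrite mxE big1 // => b _; rewrite !mxE.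
case: eqP => [ib|]; last by rewrite mul0r.
by move: (enum_valP b); rewrite -ib (negbTE iS).
Qed.

Lemma subadjE n (S : {set 'I_n}) (M : 'M[F2]_n) :
  subadj S M = (embed S)^T *m M *m embed S.
Proof.
by apply/matrixP => a b; rewrite -mulmxA embedT_mulE mul_embedE mxE.
Qed.

Lemma embed_proj (R : pzRingType) n (S : {set 'I_n}) m (N : 'M[R]_(n, m)) :
  (forall i j, i \notin S -> N i j = 0) -> embed S *m ((embed S)^T *m N) = N.
Proof.
move=> N0; apply/matrixP => i j.
case: (boolP (i \in S)) => iS; last by rewrite embed_mul_out // N0.
by rewrite -(enum_rankK_in iS iS) embed_mul_in embedT_mulE.
Qed.

Lemma in_spanP n (S : {set 'I_n}) (x : 'cV[F2]_n) :
  reflect (forall i, i \notin S -> x i 0 = 0) (in_span S x).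
Proof.
apply: (iffP forallP) => x0 i; first by move=> iS; apply/eqP/(implyP (x0 i)).
by apply/implyP => iS; apply/eqP/x0.
Qed.

Lemma embed_span n (S : {set 'I_n}) (y : 'cV[F2]_#|S|) : in_span S (embed S *m y).
Proof. by apply/in_spanP => i iS; rewrite embed_mul_out. Qed.

Lemma span_embed n (S : {set 'I_n}) (x : 'cV[F2]_n) :
  in_span S x -> x = embed S *m ((embed S)^T *m x).
Proof. by move/in_spanP => x0; rewrite embed_proj // => i j; rewrite ord1 => /x0. Qed.

Definition nondeg_on n (M : 'M[F2]_n) (S : {set 'I_n}) : Prop :=
  forall x : 'cV[F2]_n, in_span S x ->
    (forall i, i \in S -> (M *m x) i 0 = 0) -> x = 0.

Lemma subadj_unitP n (S : {set 'I_n}) (M : 'M[F2]_n) :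
  subadj S M \in unitmx <-> nondeg_on M S.
Proof.
rewrite subadjE; set E := embed S; split.
  move=> U x Sx MxS.
  have ME0 : E^T *m M *m E *m (E^T *m x) = 0.
    rewrite -mulmxA -span_embed // -mulmxA.
    by apply/matrixP => a j; rewrite embedT_mulE ord1 MxS ?enum_valP // mxE.
  by rewrite (span_embed Sx) -(mulKmx U (E^T *m x)) ME0 !mulmx0.
move=> ndeg; rewrite unitmxE unitfE; apply/negP => /eqP det0.
have /det0P [v v0 vK] : \det (E^T *m M *m E)^T == 0 by rewrite det_tr det0.
have Mv0 : E^T *m M *m E *m v^T = 0.
  by rewrite -[X in X *m _]trmxK -trmx_mul vK trmx0.
have Ev0 : E *m v^T = 0.
  apply: ndeg; first exact: embed_span.
  move=> i iS; rewrite -(enum_rankK_in iS iS) -embedT_mulE !mulmxA Mv0.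
  by rewrite mxE.
have : v^T = 0 by apply/matrixP => a j; rewrite -(embed_mul_in (S:=S)) Ev0 !mxE.
by move/(congr1 trmx); rewrite trmxK trmx0 => v_eq0; rewrite v_eq0 eqxx in v0.
Qed.

Lemma mem_R0 n (M : 'M[F2]_n) (S : {set 'I_n}) : (S \in R0 M) = (subadj S M \in unitmx).
Proof. exact: in_set. Qed.

(* Kernel form of Jacobi's complementary minors: if x is supported off S and
   N x vanishes off S, then y := N x is supported in S and M y = x vanishes on
   S, so y = 0 and hence x = M y = 0. *)
Lemma nondeg_on_compl n (M N : 'M[F2]_n) (S : {set 'I_n}) :
  M *m N = 1%:M -> nondeg_on M S -> nondeg_on N (~: S).
Proof.
move=> MN ndeg x Sx NxS.
suff Nx0 : N *m x = 0 by rewrite -(mul1mx x) -MN -mulmxA Nx0 mulmx0.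
apply: ndeg.
- by apply/in_spanP => i iS; apply: NxS; rewrite in_setC.
- move=> i iS; rewrite mulmxA MN mul1mx.
  by move/in_spanP: Sx; apply; rewrite in_setC iS.
Qed.

Lemma nondeg_on_inv n (M : 'M[F2]_n) (S : {set 'I_n}) :
  M \in unitmx -> nondeg_on M S <-> nondeg_on (invmx M) (~: S).
Proof.
move=> U; split; first exact/nondeg_on_compl/mulmxV.
by rewrite -{2}[S]setCK; apply/nondeg_on_compl/mulVmx.
Qed.

Lemma R0_inv n (M : 'M[F2]_n) :
  M \in unitmx -> R0 (invmx M) = [set ~: S | S in R0 M].
Proof.
move=> U; apply/setP => W; rewrite mem_R0; apply/idP/imsetP.
  move=> /subadj_unitP ndeg; exists (~: W); last by rewrite setCK.
  by rewrite mem_R0; apply/subadj_unitP/(nondeg_on_inv _ U); rewrite setCK.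
case=> S; rewrite mem_R0 => /subadj_unitP ndeg ->.
by apply/subadj_unitP/(nondeg_on_inv _ U).
Qed.

Lemma EformE n (M : 'M[F2]_n) (y x : 'cV[F2]_n) :
  Eform M y x = \sum_i y i 0 * (M *m x) i 0.
Proof. by rewrite /Eform -mulmxA mxE; apply: eq_bigr => i _; rewrite mxE. Qed.

Lemma Eform_sym n (M : 'M[F2]_n) (x y : 'cV[F2]_n) :
  M^T = M -> Eform M x y = Eform M y x.
Proof.
move=> Msym; rewrite /Eform.
have -> : (x^T *m M *m y) 0 0 = (x^T *m M *m y)^T 0 0 by rewrite [RHS]mxE.
by rewrite !trmx_mul trmxK Msym mulmxA.
Qed.

Lemma delta_span n (S : {set 'I_n}) i : i \in S -> in_span S (delta_mx i (0 : 'I_1)).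
Proof.
by move=> iS; apply/in_spanP => j jS; rewrite mxE; case: eqP => // ji; rewrite ji iS in jS.
Qed.

Lemma Eform_span_vanish n (M : 'M[F2]_n) (S : {set 'I_n}) (y x : 'cV[F2]_n) :
  in_span S y -> (forall i, i \in S -> (M *m x) i 0 = 0) -> Eform M y x = 0.
Proof.
move=> /in_spanP y0 Mx0; rewrite EformE big1 // => i _.
by case: (boolP (i \in S)) => iS; [rewrite Mx0 // mulr0 | rewrite y0 // mul0r].
Qed.

Lemma in_perpP n (M : 'M[F2]_n) (S : {set 'I_n}) (z : 'cV[F2]_n) :
  M^T = M -> reflect (forall i, i \in S -> (M *m z) i 0 = 0) (in_perp M S z).
Proof.
move=> Msym; apply: (iffP forallP) => [zS i iS | Mz0 y].
  move/implyP/(_ (delta_span iS))/eqP: (zS (delta_mx i 0)).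
  rewrite Eform_sym // EformE (bigD1 i) //= big1 => [|j ji].
    by rewrite mxE !eqxx mul1r addr0.
  by rewrite mxE (negbTE ji) mul0r.
by apply/implyP => Sy; rewrite Eform_sym // (Eform_span_vanish Sy Mz0).
Qed.

Lemma reducibleP n (M : 'M[F2]_n) (S : {set 'I_n}) :
  M^T = M -> M \in unitmx -> reducible M S <-> nondeg_on M S.
Proof.
move=> Msym U; split.
  move=> red x Sx MxS.
  have Ex0 w : Eform M x w = 0.
    case: (red w) => y [z [Sy /forallP/(_ x)/implyP/(_ Sx)/eqP zx ->]].
    have -> : Eform M x (y + z) = Eform M x y + Eform M x z.
      by rewrite /Eform mulmxDr mxE.
    by rewrite Eform_sym // (Eform_span_vanish Sy MxS) Eform_sym // zx addr0.
  have xM0 : x^T *m M = 0.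
    apply/matrixP => a j; rewrite ord1.
    by move: (Ex0 (delta_mx j 0)); rewrite /Eform -colE mxE => ->; rewrite mxE.
  by apply: trmx_inj; rewrite trmx0 -(mulmxK U x^T) xM0 mul0mx.
move=> ndeg x; have U' := (subadj_unitP S M).2 ndeg.
pose y := embed S *m (invmx (subadj S M) *m ((embed S)^T *m (M *m x))).
exists y, (x - y); split; first exact: embed_span.
  apply/in_perpP => // i iS.
  suff My : (M *m y) i 0 = (M *m x) i 0 by rewrite mulmxBr mxE [X in _ + X]mxE My subrr.
  rewrite -(enum_rankK_in iS iS) -!embedT_mulE /y !mulmxA -(mulmxA _ M) -subadjE.
  by rewrite -!mulmxA (mulKVmx U').
by rewrite addrC subrK.
Qed.

Lemma span_mulE n (M : 'M[F2]_n) (S : {set 'I_n}) (x : 'cV[F2]_n) i :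
  in_span S x -> (M *m x) i 0 = \sum_(j in S) M i j * x j 0.
Proof.
move/in_spanP => x0; rewrite mxE [RHS]big_mkcond; apply: eq_bigr => j _.
by case: ifP => // /negbT jS; rewrite x0 // mulr0.
Qed.

Lemma nondeg_on1 n (M : 'M[F2]_n) u : nondeg_on M [set u] <-> M u u != 0.
Proof.
split=> [ndeg|Muu].
  apply/eqP => Muu0.
  have /matrixP/(_ u 0) : delta_mx u 0 = 0 :> 'cV[F2]_n.
    apply: ndeg (delta_span (set11 u)) _ => i /set1P ->.
    by rewrite -colE mxE Muu0.
  by rewrite !mxE !eqxx => /eqP; rewrite oner_eq0.
move=> x ux Mx0; move: (Mx0 u (set11 u)); rewrite (span_mulE _ _ ux) big_set1.
move/eqP; rewrite mulf_eq0 (negbTE Muu) => /eqP xu.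
apply/matrixP => i j; rewrite ord1 mxE.
case: (eqVneq i u) => [->//|iu].
by move/in_spanP: ux; apply; rewrite in_set1.
Qed.

Section Pairs.

Variables (n : nat) (M : 'M[F2]_n) (u v : 'I_n).
Hypotheses (Msym : M^T = M) (uv : u != v).

Definition pair_vec (p q : F2) : 'cV[F2]_n := p *: delta_mx u 0 + q *: delta_mx v 0.

Lemma pair_vecE p q i : pair_vec p q i 0 = p * (i == u)%:R + q * (i == v)%:R.
Proof. by rewrite !mxE !andbT. Qed.

Lemma mul_pair_vecE p q i : (M *m pair_vec p q) i 0 = p * M i u + q * M i v.
Proof. by rewrite mulmxDr -!scalemxAr -!colE !mxE. Qed.

Lemma pair_vec_span p q : in_span [set u; v] (pair_vec p q).
Proof.
apply/in_spanP => i; rewrite in_set2 negb_or => /andP[/negbTE iu /negbTE iv].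
by rewrite pair_vecE iu iv !mulr0 addr0.
Qed.

Lemma Mvu : M v u = M u v.
Proof. by rewrite -[in LHS]Msym mxE. Qed.

Lemma nondeg_pair_sol p q : nondeg_on M [set u; v] ->
  p * M u u + q * M u v = 0 -> p * M u v + q * M v v = 0 -> p = 0 /\ q = 0.
Proof.
move=> ndeg eu ev.
have /matrixP pq0 : pair_vec p q = 0.
  apply: ndeg; first exact: pair_vec_span.
  by move=> i /set2P[]->; rewrite mul_pair_vecE // Mvu.
move: (pq0 u 0) (pq0 v 0); rewrite !pair_vecE !mxE !eqxx (negbTE uv) eq_sym (negbTE uv).
by rewrite !mulr1 !mulr0 addr0 add0r.
Qed.

Lemma nondeg_on2 : nondeg_on M [set u; v] <-> M u u * M v v - M u v * M u v != 0.
Proof.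
split=> [ndeg|det_nz].
  apply/eqP => det0.
  have [Mvv0 Muv0] : M v v = 0 /\ M u v = 0.
    have eu : M v v * M u u + - M u v * M u v = 0 by rewrite -det0; ring.
    have ev : M v v * M u v + - M u v * M v v = 0 by ring.
    by have [-> /eqP] := nondeg_pair_sol ndeg eu ev; rewrite oppr_eq0 => /eqP.
  have eu : 0 * M u u + 1 * M u v = 0 by rewrite Muv0; ring.
  have ev : 0 * M u v + 1 * M v v = 0 by rewrite Mvv0; ring.
  by have [_ /eqP] := nondeg_pair_sol ndeg eu ev; rewrite oner_eq0.
move=> x ux Mx0.
have := Mx0 u (set21 u v); have := Mx0 v (set22 u v).
rewrite !(span_mulE _ _ ux) !big_setU1 ?inE //= !big_set1 Mvu => ev eu.
have xu0 : (M u u * M v v - M u v * M u v) * x u 0 = 0.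
  transitivity (M v v * (M u u * x u 0 + M u v * x v 0)
                - M u v * (M u v * x u 0 + M v v * x v 0)); first by ring.
  by rewrite eu ev !mulr0 subr0.
have xv0 : (M u u * M v v - M u v * M u v) * x v 0 = 0.
  transitivity (M u u * (M u v * x u 0 + M v v * x v 0)
                - M u v * (M u u * x u 0 + M u v * x v 0)); first by ring.
  by rewrite eu ev !mulr0 subr0.
move/eqP: xu0; move/eqP: xv0; rewrite !mulf_eq0 (negbTE det_nz) /= => /eqP xv /eqP xu.
apply/matrixP => i j; rewrite ord1 mxE.
case: (eqVneq i u) => [->//|iu]; case: (eqVneq i v) => [->//|iv].
by move/in_spanP: ux; apply; rewrite in_set2 negb_or iu iv.
Qed.

End Pairs.

Lemma F2_cases (x : F2) : x = 0 \/ x = 1.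
Proof.
by case: x => [[|[|m]] lt_x2]; [left; apply/val_inj | right; apply/val_inj |].
Qed.

Lemma F2_mulrr (x : F2) : x * x = x.
Proof. by case: (F2_cases x) => ->; rewrite ?mulr0 ?mulr1. Qed.

Lemma F2_eq_nz (x y : F2) : (x != 0) = (y != 0) -> x = y.
Proof. by case: (F2_cases x) => ->; case: (F2_cases y) => -> //; rewrite ?oner_eq0. Qed.

(* A graph is determined by its pivotal poset: its loops are read off the
   singletons of R_0, and then its edges off the pairs of R_0. *)
Lemma graph_R0_inj n (H K : 'M[F2]_n) :
  is_graph H -> is_graph K -> R0 H = R0 K -> H = K.
Proof.
move=> Hsym Ksym HK.
have ndegHK S : nondeg_on H S <-> nondeg_on K S.
  have eqS : (subadj S H \in unitmx) = (subadj S K \in unitmx) by rewrite -!mem_R0 HK.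
  by split=> /subadj_unitP ndeg; apply/subadj_unitP; [rewrite -eqS | rewrite eqS].
have loops u : H u u = K u u.
  by apply: F2_eq_nz; apply/idP/idP => /nondeg_on1/ndegHK/nondeg_on1.
apply/matrixP => u v; case: (eqVneq u v) => [->|uv]; first exact: loops.
have : H u u * H v v - H u v * H u v = K u u * K v v - K u v * K u v.
  by apply: F2_eq_nz; apply/idP/idP =>
    [/(nondeg_on2 Hsym uv)/ndegHK/(nondeg_on2 Ksym uv)
    |/(nondeg_on2 Ksym uv)/ndegHK/(nondeg_on2 Hsym uv)].
by rewrite !loops => /addrI/oppr_inj; rewrite !F2_mulrr.
Qed.

Lemma perp_partP n (M : 'M[F2]_n) (S : {set 'I_n}) (x : 'cV[F2]_n) :
  reducible M S -> in_perp M S (perp_part M S x) /\ in_span S (x - perp_part M S x).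
Proof.
move=> red; rewrite /perp_part; case: pickP => [x' /andP[] //| none].
case: (red x) => y [z [Sy Sz xE]].
by move: (none z); rewrite Sz xE addrK Sy.
Qed.

Section GammaInverse.

Variables (n : nat) (M : 'M[F2]_n) (W : {set 'I_n}).
Hypotheses (Msym : M^T = M) (U : M \in unitmx) (red : reducible M W).

Let F : 'M[F2]_(n, #|~: W|) := embed (~: W).

Definition perp_basis : 'M[F2]_(n, #|~: W|) :=
  \matrix_(i, j) perp_part M W (delta_mx (enum_val j) 0) i 0.

Lemma col_perp_basis j : col j perp_basis = perp_part M W (delta_mx (enum_val j) 0).
Proof. by apply/matrixP => i k; rewrite ord1 !mxE. Qed.

Lemma perp_basis_orth i j : i \in W -> (M *m perp_basis) i j = 0.
Proof.
move=> iW; have -> : (M *m perp_basis) i j = (M *m col j perp_basis) i 0.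
  by rewrite colE mulmxA -colE [RHS]mxE.
rewrite col_perp_basis; move: iW; apply/(in_perpP _ _ Msym).
by have [] := perp_partP (delta_mx (enum_val j) 0) red.
Qed.

Lemma perp_basis_out i j : i \notin W -> perp_basis i j = F i j.
Proof.
move=> iW; have [_ /in_spanP/(_ i iW)/eqP] := perp_partP (delta_mx (enum_val j) 0) red.
by rewrite !mxE subr_eq0 eqxx andbT => /eqP <-.
Qed.

Lemma Gamma_perp_basis : Gamma M W = perp_basis^T *m M *m perp_basis.
Proof.
apply/matrixP => a b; rewrite /Gamma /EW /Eform mxE -!col_perp_basis.
rewrite tr_col -row_mul !mxE; apply: eq_bigr => l _; rewrite !mxE.
by congr (_ * _); apply: eq_bigr => k _; rewrite !mxE.
Qed.

(* X^T A X = E^T A X, because A X vanishes on W and X agrees with E off W. *)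
Lemma Gamma_embed : Gamma M W = F^T *m (M *m perp_basis).
Proof.
rewrite Gamma_perp_basis -mulmxA; apply/matrixP => a b; rewrite [LHS]mxE [RHS]mxE.
apply: eq_bigr => l _; rewrite [_^T _ _]mxE [_^T _ _]mxE.
by case: (boolP (l \in W)) => lW; [rewrite perp_basis_orth // !mulr0 | rewrite perp_basis_out].
Qed.

(* A^{-1}_{V\W,V\W} X^T A X = E^T A^{-1} E E^T A X = E^T A^{-1} A X = E^T X = 1. *)
Lemma subadj_inv_Gamma : subadj (~: W) (invmx M) *m Gamma M W = 1%:M.
Proof.
rewrite subadjE Gamma_embed -!mulmxA embed_proj; last first.
  by move=> i j; rewrite in_setC negbK; exact: perp_basis_orth.
rewrite (mulmxA (invmx M)) (mulVmx U) mul1mx.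
apply/matrixP => a b; rewrite embedT_mulE perp_basis_out; last first.
  by have := enum_valP a; rewrite in_setC.
by rewrite !mxE (inj_eq enum_val_inj).
Qed.

Lemma Gamma_inverse :
  Gamma M W \in unitmx /\ invmx (Gamma M W) = subadj (~: W) (invmx M).
Proof.
have [_ UG] := mulmx1_unit subadj_inv_Gamma; split=> //.
by rewrite -[RHS]mulmx1 -(mulmxV UG) mulmxA subadj_inv_Gamma mul1mx.
Qed.

End GammaInverse.

Unset Implicit Arguments.

Theorem mainTheorem19 (n : nat) (A : 'M[F2]_n) :
  is_graph A -> A \in unitmx ->
  (* (a) G^R is the unique graph H with R_0(H) = { V \ S : S in R_0(G) } *)
  [/\ (is_graph (retro A) /\ R0 (retro A) = [set ~: S | S in R0 A]) /\
      (forall H : 'M[F2]_n, is_graph H ->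
         R0 H = [set ~: S | S in R0 A] -> H = retro A),
  (* (b) *)
      (forall W : {set 'I_n}, reducible A W <-> reducible (retro A) (~: W))
  & (* (c) *)
      (forall W : {set 'I_n}, reducible A W ->
         Gamma A W \in unitmx /\ retro (Gamma A W) = subadj (~: W) (retro A))].
Proof.
move=> Asym U.
have retro_sym : is_graph (retro A) by rewrite /is_graph /retro trmx_inv Asym.
have retro_unit : retro A \in unitmx by rewrite /retro unitmx_inv.
have R0_retro := R0_inv U.
split; first split=> //.
- move=> H Hsym R0H; apply: (graph_R0_inj Hsym retro_sym).
  by rewrite R0H R0_retro.
- move=> W; rewrite (reducibleP _ Asym U) (reducibleP _ retro_sym retro_unit).
  exact: nondeg_on_inv.
- move=> W; exact: Gamma_inverse.
Qed.
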